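(* Let $A$ be a binary matrix that has an optimal binary decomposition $A=U\cdot V$ such that every row of $V$ is a row of $A$. If, in addition, $A$ has the Unique base rows sums property, then the set of columns of $U$ spans (in the binary sense) every binary base of $A$, and consequently $A$ has the Augmentation property for the binary rank.
   Context: For a binary $n\times m$ matrix $A$, the binary rank $R_{binary}(A)$ is the least $k$ with $A=UV$, $U\in\{0,1\}^{n\times k}$, $V\in\{0,1\}^{k\times m}$, ordinary arithmetic; such a decomposition with $k=R_{binary}(A)$ is an optimal binary decomposition. A set $X$ of $\{0,1\}$-vectors spans a vector $y$ (binary sense) if $y=\sum_{x\in X}c_x x$ with $c_x\in\{0,1\}$ and ordinary addition; it spans a set $Y$ if it spans each vector of $Y$. A binary base of $A$ is a set of $\{0,1\}$ column vectors spanning all columns of $A$ of minimum cardinality among such spanning sets. $A$ has the Unique base rows sums property if for every optimal binary decomposition $A=X\cdot Y$, there are no two disjoint nonempty sets of row indices $\{i_1,\dots,i_s\}$, $\{j_1,\dots,j_t\}$ of $Y$ with $y_{i_1}+\dots+y_{i_s}=y_{j_1}+\dots+y_{j_t}$ (ordinary addition). $A$ has the Augmentation property for the binary rank if for all binary column vectors $x_1,\dots,x_t$ with $R_{binary}(A|x_i)=R_{binary}(A)$ for all $i$, also $R_{binary}(A|x_1,\dots,x_t)=R_{binary}(A)$, where $(A|x_1,\dots,x_t)$ is $A$ with these columns appended. *)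

(* Binary matrices are 'M[bool]_(n,m); products and sums of
   {0,1}-entries are computed in nat (ordinary arithmetic), via nat_of_bool. *)
From mathcomp Require Import all_boot all_order all_algebra.
Set Implicit Arguments. Unset Strict Implicit. Unset Printing Implicit Defensive.

Definition bmul (n k m : nat) (U : 'M[bool]_(n, k)) (V : 'M[bool]_(k, m))
  : 'M[nat]_(n, m) :=
  (\matrix_(i, j) (\sum_(l < k) (U i l : nat) * (V l j : nat))%N)%R.

Definition bdecomp (n m k : nat) (A : 'M[bool]_(n, m))
  (U : 'M[bool]_(n, k)) (V : 'M[bool]_(k, m)) : bool :=
  map_mx nat_of_bool A == bmul U V.

Definition has_bdecomp (n m : nat) (A : 'M[bool]_(n, m)) (k : nat) : bool :=
  [exists U : 'M[bool]_(n, k), exists V : 'M[bool]_(k, m), bdecomp A U V].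

Lemma has_bdecomp_ex (n m : nat) (A : 'M[bool]_(n, m)) :
  exists k, has_bdecomp A k.
Proof.
exists m; apply/existsP; exists A; apply/existsP.
exists (\matrix_(i, j) (i == j))%R; apply/eqP/matrixP => i j.
rewrite !mxE (bigD1 j) //= mxE eqxx muln1 big1 ?addn0 // => l /negbTE nlj.
by rewrite mxE nlj muln0.
Qed.

Definition brank (n m : nat) (A : 'M[bool]_(n, m)) : nat :=
  ex_minn (has_bdecomp_ex A).

Definition bspans_vec (n : nat) (X : {set 'cV[bool]_n}) (y : 'cV[bool]_n) : Prop :=
  exists c : 'cV[bool]_n -> bool,
    forall i, (y i ord0 : nat) = (\sum_(x in X) (c x : nat) * (x i ord0 : nat))%N.

Definition bspans (n : nat) (X Y : {set 'cV[bool]_n}) : Prop :=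
  forall y, y \in Y -> bspans_vec X y.

Definition cols (n m : nat) (A : 'M[bool]_(n, m)) : {set 'cV[bool]_n} :=
  [set col j A | j : 'I_m].

Definition binary_base (n m : nat) (A : 'M[bool]_(n, m)) (B : {set 'cV[bool]_n}) : Prop :=
  bspans B (cols A) /\
  forall B' : {set 'cV[bool]_n}, bspans B' (cols A) -> (#|B| <= #|B'|)%N.

Definition unique_base_rows_sums (n m : nat) (A : 'M[bool]_(n, m)) : Prop :=
  forall (X : 'M[bool]_(n, brank A)) (Y : 'M[bool]_(brank A, m)),
    bdecomp A X Y ->
    forall I J : {set 'I_(brank A)},
      I != set0 -> J != set0 -> [disjoint I & J] ->
      ~ (forall j : 'I_m,
           (\sum_(i in I) (Y i j : nat))%N = (\sum_(i in J) (Y i j : nat))%N).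

Definition augment (n m t : nat) (A : 'M[bool]_(n, m)) (xs : 'I_t -> 'cV[bool]_n)
  : 'M[bool]_(n, m + t) :=
  row_mx A (\matrix_(r, i) xs i r ord0)%R.

Definition augmentation_property (n m : nat) (A : 'M[bool]_(n, m)) : Prop :=
  forall (t : nat) (xs : 'I_t -> 'cV[bool]_n),
    (forall i : 'I_t, brank (augment A (fun _ : 'I_1 => xs i)) = brank A) ->
    brank (augment A xs) = brank A.

From mathcomp Require Import all_boot all_order all_algebra.
Set Implicit Arguments. Unset Strict Implicit. Unset Printing Implicit Defensive.

(* Fix the optimal decomposition A = U V with V = rowsub r A.  For any optimal
   A = X Y, the matrix W = U (rowsub r X) satisfies
   W Y = U (rowsub r (X Y)) = U V = A = X Y.  No row of Y vanishes, so W has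
   0/1 entries, and the Unique base rows sums property says that a 0/1 row is
   determined by its product with Y: hence X = U (rowsub r X).  A binary base
   is the column set of some optimal X, so it is spanned by the columns of U.
   Likewise, if appending a column x keeps the rank, then x = X y for an
   optimal X of A, so x = U (rowsub r X y), where rowsub r X y is 0/1 because
   no column of U vanishes; appending all such columns at once gives the
   decomposition (A | x_1 ... x_t) = U (V | Z) of the same size. *)

Local Notation nmx := (map_mx nat_of_bool).

Lemma mulmx_natE p q s (M : 'M[nat]_(p, q)) (N : 'M[nat]_(q, s)) i j :
  (M *m N)%R i j = \sum_l M i l * N l j.
Proof. by rewrite mxE. Qed.

Lemma bmulE n k m (X : 'M[bool]_(n, k)) (Y : 'M[bool]_(k, m)) :
  bmul X Y = (nmx X *m nmx Y)%R.
Proof.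
apply/matrixP => i j; rewrite mulmx_natE mxE.
by apply: eq_bigr => l _; rewrite !mxE.
Qed.

Section Decomposition.
Variables (n m k : nat) (A : 'M[bool]_(n, m)).
Implicit Types (X : 'M[bool]_(n, k)) (Y : 'M[bool]_(k, m)).

Lemma bdecompP X Y : reflect (nmx A = nmx X *m nmx Y)%R (bdecomp A X Y).
Proof. by rewrite /bdecomp bmulE; apply: eqP. Qed.

Lemma bdecomp_entryP X Y :
  reflect (forall i j, A i j = \sum_l X i l * Y l j :> nat) (bdecomp A X Y).
Proof.
apply: (iffP (bdecompP X Y)) => [AXY i j | AXY].
  move/matrixP: AXY => /(_ i j); rewrite mulmx_natE mxE => ->.
  by apply: eq_bigr => l _; rewrite !mxE.
apply/matrixP => i j; rewrite mulmx_natE mxE AXY.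
by apply: eq_bigr => l _; rewrite !mxE.
Qed.

Lemma bdecomp_brank X Y : bdecomp A X Y -> brank A <= k.
Proof.
move=> XY; rewrite /brank; case: ex_minnP => r _; apply.
by apply/existsP; exists X; apply/existsP; exists Y.
Qed.

End Decomposition.

Lemma bdecomp_col n m k (A : 'M[bool]_(n, m)) (X : 'M[bool]_(n, k))
    (Y : 'M[bool]_(k, m)) j :
  bdecomp A X Y -> bdecomp (col j A) X (col j Y).
Proof.
move/bdecomp_entryP => AXY; apply/bdecomp_entryP => i j'.
by rewrite !mxE AXY; apply: eq_bigr => l _; rewrite mxE.
Qed.

Lemma bdecomp_cols n m k (A : 'M[bool]_(n, m)) (X : 'M[bool]_(n, k))
    (z : 'I_m -> 'cV[bool]_k) :
  (forall j, bdecomp (col j A) X (z j)) ->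
  bdecomp A X (\matrix_(l, j) z j l ord0)%R.
Proof.
move=> Az; apply/bdecomp_entryP => i j.
have /bdecomp_entryP/(_ i ord0) := Az j; rewrite !mxE => ->.
by apply: eq_bigr => l _; rewrite mxE.
Qed.

Lemma brank_bdecomp n m (A : 'M[bool]_(n, m)) :
  exists (X : 'M[bool]_(n, brank A)) (Y : 'M[bool]_(brank A, m)), bdecomp A X Y.
Proof.
by rewrite /brank; case: ex_minnP => r /existsP[X /existsP[Y XY]] _; exists X, Y.
Qed.

Lemma bdecomp_row_mx n m1 m2 k (A1 : 'M[bool]_(n, m1)) (A2 : 'M[bool]_(n, m2))
    (X : 'M[bool]_(n, k)) (Y1 : 'M[bool]_(k, m1)) (Y2 : 'M[bool]_(k, m2)) :
  bdecomp (row_mx A1 A2) X (row_mx Y1 Y2) = bdecomp A1 X Y1 && bdecomp A2 X Y2.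
Proof.
rewrite /bdecomp !bmulE !map_row_mx mul_mx_row.
by apply/eqP/andP => [/eq_row_mx[-> ->] | [/eqP-> /eqP->]].
Qed.

Lemma brank_row_mxl n m1 m2 (A1 : 'M[bool]_(n, m1)) (A2 : 'M[bool]_(n, m2)) :
  brank A1 <= brank (row_mx A1 A2).
Proof.
have [X [Y]] := brank_bdecomp (row_mx A1 A2).
by rewrite -(hsubmxK Y) bdecomp_row_mx => /andP[/bdecomp_brank].
Qed.

Lemma bdecomp_delete n m k (A : 'M[bool]_(n, m)) (X : 'M[bool]_(n, k.+1))
    (Y : 'M[bool]_(k.+1, m)) l :
  (forall i j, ~~ (X i l && Y l j)) -> bdecomp A X Y ->
  bdecomp A (col' l X) (row' l Y).
Proof.
move=> null /bdecomp_entryP AXY; apply/bdecomp_entryP => i j.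
rewrite AXY (bigD1_ord l) //=; have := null i j.
case: (X i l) (Y l j) => [] [] // _; rewrite ?mul0n ?muln0 add0n;
  by apply: eq_bigr => a _; rewrite !mxE.
Qed.

Lemma brank_lt_null n m k (A : 'M[bool]_(n, m)) (X : 'M[bool]_(n, k))
    (Y : 'M[bool]_(k, m)) l :
  (forall i j, ~~ (X i l && Y l j)) -> bdecomp A X Y -> brank A < k.
Proof.
case: k X Y l => [|k] X Y l; first by case: l.
by move=> null /(bdecomp_delete null)/bdecomp_brank.
Qed.

Section OptimalDecomposition.
Variables (n m : nat) (A : 'M[bool]_(n, m)).
Variables (X : 'M[bool]_(n, brank A)) (Y : 'M[bool]_(brank A, m)).
Hypothesis XY : bdecomp A X Y.

Lemma optimal_support l : exists i j, X i l && Y l j.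
Proof.
have [/existsP[i /existsP[j XYij]] | /existsPn null] :=
  boolP [exists i, exists j, X i l && Y l j]; first by exists i, j.
suff null_l : forall i j, ~~ (X i l && Y l j).
  by have := brank_lt_null null_l XY; rewrite ltnn.
by move=> i j; apply: contra (null i) => XYij; apply/existsP; exists j.
Qed.

Lemma optimal_row_neq0 l : exists j, Y l j.
Proof. by have [i [j /andP[_ Ylj]]] := optimal_support l; exists j. Qed.

Lemma optimal_col_neq0 l : exists i, X i l.
Proof. by have [i [j /andP[Xil _]]] := optimal_support l; exists i. Qed.

End OptimalDecomposition.

Lemma bdecomp_merge n m k (A : 'M[bool]_(n, m)) (X : 'M[bool]_(n, k))
    (Y : 'M[bool]_(k, m)) l l' :
  l != l' -> col l X = col l' X -> bdecomp A X Y ->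
  bdecomp A X (\matrix_(a, j)
                 if a == l then Y l j || Y l' j else (a != l') && Y a j)%R.
Proof.
move=> ll' Xll' /bdecomp_entryP AXY; apply/bdecomp_entryP => i j.
have Xi : X i l' = X i l by move/colP: Xll' => /(_ i); rewrite !mxE.
have sum_ll' (F : 'I_k -> nat) :
    \sum_a F a = F l + F l' + \sum_(a | (a != l) && (a != l')) F a.
  by rewrite (bigD1 l) // (bigD1 l') 1?eq_sym //= addnA.
(* X i l * (Y l j + Y l' j) <= A i j <= 1, so the merged row l loses nothing. *)
have := leq_b1 (A i j); rewrite AXY !sum_ll' => /(leq_trans (leq_addr _ _)).
rewrite !mxE eqxx eq_sym (negbTE ll') eqxx Xi => bound; congr (_ + _).
  by move: bound; case: (X i l) (Y l j) (Y l' j) => [] [] [].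
by apply: eq_bigr => a /andP[al al']; rewrite mxE (negbTE al) al'.
Qed.

Lemma optimal_col_inj n m (A : 'M[bool]_(n, m)) (X : 'M[bool]_(n, brank A))
    (Y : 'M[bool]_(brank A, m)) :
  bdecomp A X Y -> injective (fun l => col l X).
Proof.
move=> XY l l' Xll'; apply/eqP/negPn/negP => ll'.
have [j] := optimal_row_neq0 (bdecomp_merge ll' Xll' XY) l'.
by rewrite mxE eq_sym (negbTE ll') eqxx.
Qed.

Lemma sum_nat_of_bool_mul k (c : 'I_k -> bool) (F : 'I_k -> nat) :
  \sum_l c l * F l = \sum_(l | c l) F l.
Proof.
by rewrite [RHS]big_mkcond; apply: eq_bigr => l _; case: (c l); rewrite ?mul1n.
Qed.

Lemma unique_base_rows_sums_mulmxI n m (A : 'M[bool]_(n, m))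
    (X : 'M[bool]_(n, brank A)) (Y : 'M[bool]_(brank A, m))
    p (P Q : 'M[bool]_(p, brank A)) :
  unique_base_rows_sums A -> bdecomp A X Y ->
  (nmx P *m nmx Y = nmx Q *m nmx Y)%R -> P = Q.
Proof.
move=> ubrs XY PQY; apply/row_matrixP => i.
have : (nmx (row i P) *m nmx Y = nmx (row i Q) *m nmx Y)%R.
  by rewrite !map_row -!row_mul PQY.
move: (row i P) (row i Q) => a b {PQY} abY.
set I := [set l | a ord0 l && ~~ b ord0 l].
set J := [set l | b ord0 l && ~~ a ord0 l].
have sumIJ j : \sum_(l in I) Y l j = \sum_(l in J) Y l j :> nat.
  (* cancel the rows where a and b are both 1 from a Y = b Y *)
  move/matrixP: abY => /(_ ord0 j); rewrite !mulmx_natE.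
  under eq_bigr do rewrite !mxE; under [RHS]eq_bigr do rewrite !mxE.
  rewrite !sum_nat_of_bool_mul (bigID (b ord0)) [X in _ = X](bigID (a ord0)) /=.
  rewrite [X in _ = X + _](eq_bigl (fun l => a ord0 l && b ord0 l)) => [|l].
    by move/addnI => IJ; rewrite (eq_bigl _ _ (fun l => in_set _ l)) IJ;
      apply: eq_bigl => l; rewrite inE.
  exact: andbC.
have sum_neq0 (K : {set 'I_(brank A)}) l :
    l \in K -> exists j, \sum_(a in K) Y a j != 0 :> nat.
  move=> lK; have [j Ylj] := optimal_row_neq0 XY l.
  by exists j; rewrite (bigD1 l) //= Ylj.
suff [I0 J0] : I = set0 /\ J = set0.
  apply/rowP => l; move/setP: I0 => /(_ l); move/setP: J0 => /(_ l).
  by rewrite !inE; case: (a ord0 l) (b ord0 l) => [] [].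
case: (set_0Vmem I) => [I0 | [l lI]]; case: (set_0Vmem J) => [J0 | [l' l'J]] //.
- by have [j] := sum_neq0 J l' l'J; rewrite -sumIJ I0 big_set0.
- by have [j] := sum_neq0 I l lI; rewrite sumIJ J0 big_set0.
exfalso; apply: (ubrs X Y XY I J _ _ _ sumIJ).
- by apply/set0Pn; exists l.
- by apply/set0Pn; exists l'.
by apply/pred0P => c /=; rewrite !inE; case: (a ord0 c) (b ord0 c) => [] [].
Qed.

Definition binary_mx p q (M : 'M[nat]_(p, q)) : Prop :=
  exists B : 'M[bool]_(p, q), M = nmx B.

Lemma binary_mx_mulr p q s (M : 'M[nat]_(p, q)) (B : 'M[bool]_(q, s)) :
  (forall l, exists j, B l j) -> binary_mx (M *m nmx B)%R -> binary_mx M.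
Proof.
move=> Bnz [C MBC]; exists (map_mx (fun x => x != 0) M); apply/matrixP => i l.
have [j Blj] := Bnz l.
have : M i l <= 1.
  apply: leq_trans (leq_b1 (C i j)); move/matrixP: MBC => /(_ i j).
  by rewrite mulmx_natE mxE (bigD1 l) //= mxE Blj muln1 => <-; apply: leq_addr.
by rewrite !mxE; case: (M i l) => [|[]].
Qed.

Lemma binary_mx_mull p q s (B : 'M[bool]_(p, q)) (M : 'M[nat]_(q, s)) :
  (forall l, exists i, B i l) -> binary_mx (nmx B *m M)%R -> binary_mx M.
Proof.
move=> Bnz [C BMC].
have BTnz l : exists i, trmx B l i by have [i Bil] := Bnz l; exists i; rewrite mxE.
have MB : binary_mx (trmx M *m nmx (trmx B))%R.
  by exists (trmx C); rewrite -!map_trmx -trmx_mul BMC.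
have [D MD] := binary_mx_mulr BTnz MB.
by exists (trmx D); rewrite -map_trmx -MD trmxK.
Qed.

Section RowsOfA.
Variables (n m : nat) (A : 'M[bool]_(n, m)).
Variables (U : 'M[bool]_(n, brank A)) (r : 'I_(brank A) -> 'I_n).
Hypotheses (UAr : bdecomp A U (rowsub r A)) (ubrs : unique_base_rows_sums A).

Lemma optimal_factor_rowsub (X : 'M[bool]_(n, brank A))
    (Y : 'M[bool]_(brank A, m)) :
  bdecomp A X Y -> bdecomp X U (rowsub r X).
Proof.
move=> XY; have /bdecompP AXY := XY; have /bdecompP AUAr := UAr.
have UXrY : (nmx U *m nmx (rowsub r X) *m nmx Y = nmx A)%R.
  by rewrite -mulmxA !map_mxsub mul_rowsub_mx -AXY -map_mxsub -AUAr.
have [W UXrW] : binary_mx (nmx U *m nmx (rowsub r X))%R.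
  by apply: (binary_mx_mulr (optimal_row_neq0 XY)); exists A.
have XW : X = W.
  by apply: (unique_base_rows_sums_mulmxI ubrs XY); rewrite -UXrW UXrY.
by apply/bdecompP; rewrite UXrW XW.
Qed.

Lemma bdecomp_of_brank_row_mx q (x : 'M[bool]_(n, q)) :
  brank (row_mx A x) = brank A -> exists Z, bdecomp x U Z.
Proof.
move=> rk; have := brank_bdecomp (row_mx A x); rewrite rk => -[X [Y]].
rewrite -(hsubmxK Y) bdecomp_row_mx => /andP[XY1 /bdecompP xXY2].
have /bdecompP XUXr := optimal_factor_rowsub XY1.
have [Z UZ] : binary_mx (nmx (rowsub r X) *m nmx (rsubmx Y))%R.
  apply: (binary_mx_mull (optimal_col_neq0 UAr)).
  by exists x; rewrite mulmxA -XUXr.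
by exists Z; apply/bdecompP; rewrite -UZ mulmxA -XUXr.
Qed.

End RowsOfA.

Lemma bspans_vec_cols n k (X : 'M[bool]_(n, k)) (y : 'cV[bool]_n)
    (z : 'cV[bool]_k) :
  injective (fun l => col l X) -> bdecomp y X z -> bspans_vec (cols X) y.
Proof.
move=> Xinj /bdecomp_entryP yXz.
exists (fun x => [exists l, (col l X == x) && z l ord0]) => i.
rewrite yXz big_imset /=; last by move=> a b _ _; apply: Xinj.
apply: eq_bigr => l _; rewrite mxE mulnC; congr (_ * _); congr nat_of_bool.
apply/idP/existsP => [zl | [l' /andP[/eqP/Xinj -> //]]].
by exists l; rewrite eqxx.
Qed.

Lemma optimal_cols_bspans n m (A : 'M[bool]_(n, m)) (X : 'M[bool]_(n, brank A))
    (Y : 'M[bool]_(brank A, m)) :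
  bdecomp A X Y -> bspans (cols X) (cols A).
Proof.
move=> XY _ /imsetP[j _ ->].
exact: bspans_vec_cols (optimal_col_inj XY) (bdecomp_col j XY).
Qed.

Lemma bspans_bdecomp n m (A : 'M[bool]_(n, m)) (B : {set 'cV[bool]_n}) :
  bspans B (cols A) ->
  exists (X : 'M[bool]_(n, #|B|)) (Y : 'M[bool]_(#|B|, m)),
    bdecomp A X Y /\ cols X = B.
Proof.
move=> BA.
have Aj j : exists c : 'cV[bool]_n -> bool,
    forall i, A i j = \sum_(x in B) c x * x i ord0 :> nat.
  have [|c Ac] := BA (col j A); first by apply/imsetP; exists j.
  by exists c => i; rewrite -Ac mxE.
have [c Ac] := fin_all_exists Aj.
pose X : 'M[bool]_(n, #|B|) := (\matrix_(i, l) (enum_val l : 'cV_n) i ord0)%R.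
exists X, (\matrix_(l, j) c j (enum_val l))%R; split.
  apply/bdecomp_entryP => i j; rewrite Ac big_enum_val; apply: eq_bigr => l _.
  by rewrite !mxE mulnC.
have col_enum l : col l X = enum_val l.
  by apply/matrixP => i j; rewrite !mxE [j]ord1.
apply/setP => b; apply/imsetP/idP => [[l _ ->] | bB].
  by rewrite col_enum enum_valP.
by exists (enum_rank_in bB b); rewrite // col_enum enum_rankK_in.
Qed.

Lemma binary_base_optimal n m (A : 'M[bool]_(n, m)) (B : {set 'cV[bool]_n}) :
  binary_base A B ->
  exists (X : 'M[bool]_(n, brank A)) (Y : 'M[bool]_(brank A, m)),
    bdecomp A X Y /\ cols X = B.
Proof.
case=> BA Bmin; have [X [Y [XY XB]]] := bspans_bdecomp BA.
suff e : #|B| = brank A.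
  by move: X Y XY XB; rewrite e => X' Y' XY' XB'; exists X', Y'.
have [U [V UV]] := brank_bdecomp A.
apply/eqP; rewrite eqn_leq (bdecomp_brank XY) andbT.
apply: leq_trans (Bmin _ (optimal_cols_bspans UV)) _.
by apply: leq_trans (leq_imset_card _ _) _; rewrite card_ord.
Qed.

Theorem theorem2 (n m : nat) (A : 'M[bool]_(n, m))
  (U : 'M[bool]_(n, brank A)) (V : 'M[bool]_(brank A, m)) :
  bdecomp A U V ->
  (forall l : 'I_(brank A), exists i : 'I_n, row l V = row i A) ->
  unique_base_rows_sums A ->
  (forall B : {set 'cV[bool]_n}, binary_base A B -> bspans (cols U) B) /\
  augmentation_property A.
Proof.
move=> UV /fin_all_exists[r Vr] ubrs.
have {Vr} UAr : bdecomp A U (rowsub r A).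
  suff -> : rowsub r A = V by [].
  by apply/row_matrixP => l; rewrite row_rowsub Vr.
split.
  move=> B /binary_base_optimal[X [Y [XY <-]]] _ /imsetP[l _ ->].
  apply: bspans_vec_cols (optimal_col_inj UAr) _.
  exact: bdecomp_col (optimal_factor_rowsub UAr ubrs XY).
move=> t xs rk; apply/eqP; rewrite eqn_leq brank_row_mxl andbT.
pose xm : 'M[bool]_(n, t) := (\matrix_(i, s) xs s i ord0)%R.
have xU s : exists z, bdecomp (col s xm) U z.
  apply: (bdecomp_of_brank_row_mx UAr ubrs).
  rewrite -(rk s) /augment; congr (brank (row_mx A _)).
  by apply/matrixP => i j; rewrite !mxE.
have [z xzU] := fin_all_exists xU.
pose Z := (\matrix_(l, s) z s l ord0)%R.
apply: (bdecomp_brank (X := U) (Y := row_mx (rowsub r A) Z)).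
by rewrite /augment bdecomp_row_mx UAr (bdecomp_cols xzU).
Qed.
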